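(* Let $\Gamma:\Delta\to\mathbb{R}_+$ with $\Gamma(s,s)>0$ for all $s\ge0$, and let $\rho$ be a Borel measure on $\mathbb{R}_+$ finite on compact sets. Then $\Gamma$ preserves nonnegativity if and only if $\Gamma^\rho(t,s)=\Gamma(t,s)e^{-\rho((s,t])}$ preserves nonnegativity.
   Context: $\Delta=\{(t,s):0\le s\le t\}$. A kernel $\Gamma:\Delta\to\mathbb{R}_+$ preserves nonnegativity if for every $T>0$, $K\in\mathbb{N}^*$, $x_1,\dots,x_K\in\mathbb{R}$ and $0\le t_1<\dots<t_K<T$ with $\sum_{k'=1}^kx_{k'}\Gamma(t_k,t_{k'})\ge0$ for all $k$, one has $\sum_{k:t_k\le t}x_k\Gamma(t,t_k)\ge0$ for all $t\in[0,T]$. *)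

From HB Require Import structures.
From mathcomp Require Import all_boot all_order all_algebra.
From mathcomp Require Import all_classical all_reals all_analysis.
Set Implicit Arguments. Unset Strict Implicit. Unset Printing Implicit Defensive.
Import Order.TTheory GRing.Theory Num.Theory.
Local Open Scope ring_scope.
Local Open Scope classical_set_scope.

(* A kernel Gamma on Delta = {(t,s) : 0 <= s <= t}, represented as a function
   R -> R -> R of which only the values on Delta are ever used. *)
Definition preserves_nonneg (R : realType) (Gamma : R -> R -> R) : Prop :=
  forall (T : R) (K : nat) (x : 'I_K -> R) (tt : 'I_K -> R),
    0 < T -> (0 < K)%N ->
    (forall k : 'I_K, 0 <= tt k /\ tt k < T) ->
    (forall i j : 'I_K, (i < j)%N -> tt i < tt j) ->
    (forall k : 'I_K,
        0 <= \sum_(k' < K | (k' <= k)%N) x k' * Gamma (tt k) (tt k')) ->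
    forall t : R, 0 <= t <= T ->
      0 <= \sum_(k < K | tt k <= t) x k * Gamma t (tt k).

Definition Gamma_rho (R : realType) (Gamma : R -> R -> R)
  (rho : {measure set R -> \bar R}) : R -> R -> R :=
  fun t s => Gamma t s * expR (- fine (rho `]s, t]%classic)).

(* The weight exp(-rho((s,t])) factors as exp(-F t) exp(F s) with
   F t = rho([0,t]), so Gamma^rho is Gamma multiplied by a positive function
   of t and a positive function of s.  Such a rescaling preserves the
   property: the factor of s is absorbed into the coefficients x_k, and the
   factor of t does not change the sign of any of the sums involved. *)
From HB Require Import structures.
From mathcomp Require Import all_boot all_order all_algebra.
From mathcomp Require Import all_classical all_reals all_analysis.
From mathcomp Require Import ring.
Import Order.TTheory GRing.Theory Num.Theory.
Local Open Scope ring_scope.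
Local Open Scope classical_set_scope.

Lemma preserves_nonneg_rescale (R : realType) (G1 G2 : R -> R -> R)
    (a b : R -> R) :
  (forall t, 0 <= t -> 0 < a t) ->
  (forall t s, 0 <= s -> s <= t -> G2 t s = a t * G1 t s * b s) ->
  preserves_nonneg G1 -> preserves_nonneg G2.
Proof.
move=> a_gt0 G2E G1_nn T K x tt T_gt0 K_gt0 tt_range tt_incr hyp t t_range.
pose y k := x k * b (tt k).
have tt_ge0 k : 0 <= tt k by case: (tt_range k).
have tt_mono (i j : 'I_K) : (i <= j)%N -> tt i <= tt j.
  by rewrite leq_eqVlt => /orP[/eqP/val_inj -> // | /tt_incr/ltW].
have sumE (u : R) (P : pred 'I_K) : (forall k, P k -> tt k <= u) ->
    \sum_(k < K | P k) x k * G2 u (tt k) =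
    a u * \sum_(k < K | P k) y k * G1 u (tt k).
  move=> P_le; rewrite mulr_sumr; apply: eq_bigr => k Pk.
  by rewrite G2E ?P_le // /y; ring.
have y_nn (k : 'I_K) : 0 <= \sum_(k' < K | (k' <= k)%N) y k' * G1 (tt k) (tt k').
  have := hyp k; rewrite sumE; last by move=> k' /tt_mono.
  by rewrite pmulr_rge0 // a_gt0.
have [t_ge0 _] := andP t_range.
rewrite sumE // mulr_ge0 //; first exact/ltW/a_gt0.
exact: (G1_nn T K y tt T_gt0 K_gt0 tt_range tt_incr y_nn).
Qed.

Lemma preserves_nonneg_rescaleE (R : realType) (G1 G2 : R -> R -> R)
    (a b : R -> R) :
  (forall t, 0 <= t -> 0 < a t) -> (forall s, 0 <= s -> b s != 0) ->
  (forall t s, 0 <= s -> s <= t -> G2 t s = a t * G1 t s * b s) ->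
  preserves_nonneg G1 <-> preserves_nonneg G2.
Proof.
move=> a_gt0 b_neq0 G2E; split; first exact: preserves_nonneg_rescale G2E.
apply: (preserves_nonneg_rescale _ _ _ (fun t => (a t)^-1) (fun s => (b s)^-1)).
  by move=> t t_ge0; rewrite invr_gt0 a_gt0.
move=> t s s_ge0 st; have a_neq0 : a t != 0 by rewrite gt_eqF // a_gt0 // (le_trans s_ge0).
by rewrite G2E //; field; rewrite a_neq0 b_neq0.
Qed.

Lemma fine_measure_itv_oc (R : realType) (mu : {measure set R -> \bar R})
    (a s t : R) :
  a <= s -> s <= t -> (mu `[a, t] < +oo)%E ->
  fine (mu `]s, t]) = fine (mu `[a, t]) - fine (mu `[a, s]).
Proof.
move=> a_le_s s_le_t mu_fin.
have itvU : `[a, t] = `[a, s] `|` `]s, t].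
  by rewrite (@itv_bndbnd_setU _ _ _ (BRight s)) // bnd_simp.
have itvI : `[a, s] `&` `]s, t] = set0.
  apply/seteqP; split => // z [/=]; rewrite !in_itv /= => /andP[_ zs] /andP[sz _].
  by move: (lt_le_trans sz zs); rewrite ltxx.
move: mu_fin; rewrite itvU measureU // => mu_fin.
have [mu1_fin mu2_fin] : (mu `[a, s] \is a fin_num /\ mu `]s, t] \is a fin_num)%E.
  by split; rewrite ge0_fin_numE //; apply: le_lt_trans mu_fin; rewrite ?leeDl ?leeDr.
by rewrite fineD //; ring.
Qed.

Theorem mainTheorem17 (R : realType) (Gamma : R -> R -> R)
  (rho : {measure set R -> \bar R})
  (HGnn : forall t s : R, 0 <= s -> s <= t -> 0 <= Gamma t s)
  (HGdiag : forall s : R, 0 <= s -> 0 < Gamma s s)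
  (Hrho : forall b : R, 0 <= b -> (rho [set x : R | (0 <= x <= b)%R] < +oo)%E) :
  preserves_nonneg Gamma <-> preserves_nonneg (Gamma_rho Gamma rho).
Proof.
pose F t := fine (rho `[0, t]).
apply: (preserves_nonneg_rescaleE _ _ _ (fun t => expR (- F t)) (fun s => expR (F s))).
- by move=> t _; exact: expR_gt0.
- by move=> s _; rewrite gt_eqF ?expR_gt0.
move=> t s s_ge0 st; rewrite /Gamma_rho (@fine_measure_itv_oc _ _ 0) //;
  last exact/Hrho/(le_trans s_ge0).
by rewrite opprB addrC expRD; ring.
Qed.
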